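(* Let $\Gamma=(V,\nu,\mu)$ be a fuzzy graph on $n$ vertices that is not fuzzy-regular, with maximum fuzzy degree $\Delta$ and minimum fuzzy degree $\delta$. Then $$\sigma^*(\Gamma)\ge\frac{(\Delta-\delta)^2}{n^2}.$$
   Context: A fuzzy graph $\Gamma=(V,\nu,\mu)$ consists of a finite vertex set $V$ with $|V|=n\ge1$, a map $\nu:V\to[0,1]$, and a symmetric map $\mu:V\times V\to[0,1]$ with $\mu(u,v)\le\min(\nu(u),\nu(v))$. The fuzzy degree is $d_\Gamma(v)=\sum_{u\ne v}\mu(v,u)$; $\Gamma$ is fuzzy-regular if all fuzzy degrees are equal. The fuzzy size is $\mathrm{ew}(\Gamma)=\frac12\sum_v d_\Gamma(v)$, $\lambda=2\,\mathrm{ew}(\Gamma)/n$, and the fuzzy sigma index is $\sigma^*(\Gamma)=\frac1n\sum_{v}(d_\Gamma(v)-\lambda)^2$. $\Delta=\max_v d_\Gamma(v)$, $\delta=\min_v d_\Gamma(v)$. *)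

From mathcomp Require Import all_boot all_order all_algebra.
Set Implicit Arguments. Unset Strict Implicit. Unset Printing Implicit Defensive.
Import Order.TTheory GRing.Theory Num.Theory.
Local Open Scope ring_scope.

Section Fuzzy.
Variables (R : realFieldType) (V : finType).

Definition is_fuzzy_graph (nu : V -> R) (mu : V -> V -> R) : Prop :=
  (forall v, 0 <= nu v <= 1) /\
  (forall u v, 0 <= mu u v <= 1) /\
  (forall u v, mu u v = mu v u) /\
  (forall u v, mu u v <= Num.min (nu u) (nu v)).

Definition fdeg (mu : V -> V -> R) (v : V) : R :=
  \sum_(u | u != v) mu v u.

Definition fuzzy_regular (mu : V -> V -> R) : Prop :=
  forall u v, fdeg mu u = fdeg mu v.

Definition fsize (mu : V -> V -> R) : R := (\sum_v fdeg mu v) / 2.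

Definition flambda (mu : V -> V -> R) : R := 2 * fsize mu / #|V|%:R.

Definition fsigma (mu : V -> V -> R) : R :=
  (\sum_v (fdeg mu v - flambda mu) ^+ 2) / #|V|%:R.

Definition fDelta (v0 : V) (mu : V -> V -> R) : R := \big[Num.max/fdeg mu v0]_v fdeg mu v.
Definition fdelta (v0 : V) (mu : V -> V -> R) : R := \big[Num.min/fdeg mu v0]_v fdeg mu v.

End Fuzzy.

(** The two extreme degrees [d_a = Delta] and [d_b = delta] alone already give
    [(d_a - d_b)^2 <= 2 ((d_a - lambda)^2 + (d_b - lambda)^2) <= 2 n sigma*],
    the first step because the difference is
    [(d_a + d_b - 2 lambda)^2 >= 0].  If [a <> b] then [n >= 2], so
    [2 n sigma* <= n^2 sigma*]; if [a = b] the bound is [0]. *)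

From mathcomp Require Import all_boot all_order all_algebra.
From mathcomp Require Import ring.
Set Implicit Arguments. Unset Strict Implicit. Unset Printing Implicit Defensive.
Import Order.TTheory GRing.Theory Num.Theory.
Local Open Scope ring_scope.

Section Extremum.
Variables (d : Order.disp_t) (T : orderType d) (I : finType) (i0 : I) (F : I -> T).

Lemma bigmax_attained : exists i, \big[Order.max/F i0]_i F i = F i.
Proof.
apply: (big_ind (fun x => exists i, x = F i)); first by exists i0.
- by move=> _ _ [u ->] [w ->]; case: (leP (F u) (F w)) => _; [exists w | exists u].
- by move=> i _; exists i.
Qed.

Lemma bigmin_attained : exists i, \big[Order.min/F i0]_i F i = F i.
Proof.
apply: (big_ind (fun x => exists i, x = F i)); first by exists i0.
- by move=> _ _ [u ->] [w ->]; case: (leP (F u) (F w)) => _; [exists u | exists w].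
- by move=> i _; exists i.
Qed.

End Extremum.

Lemma sqr_subr_le_sqr_dev (R : realDomainType) (x y c : R) :
  (x - y) ^+ 2 <= 2 * ((x - c) ^+ 2 + (y - c) ^+ 2).
Proof.
rewrite -subr_ge0.
have -> : 2 * ((x - c) ^+ 2 + (y - c) ^+ 2) - (x - y) ^+ 2 = (x + y - 2 * c) ^+ 2.
  by ring.
exact: sqr_ge0.
Qed.

Lemma sqr_subr_le_sum_sqr_dev (R : realDomainType) (I : finType) (F : I -> R)
    (c : R) (a b : I) :
  (F a - F b) ^+ 2 <= 2 * \sum_i (F i - c) ^+ 2.
Proof.
have sum_ge0 : forall P : pred I, 0 <= \sum_(i | P i) (F i - c) ^+ 2.
  by move=> P; apply: sumr_ge0 => i _; exact: sqr_ge0.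
have [<-|neq_ab] := eqVneq a b.
  by rewrite subrr expr0n mulr_ge0.
apply: le_trans (sqr_subr_le_sqr_dev (F a) (F b) c) _; rewrite ler_pM2l ?ltr0n //.
rewrite (bigD1 a) //= (bigD1 b) 1?eq_sym //= addrA lerDl.
exact: sum_ge0.
Qed.

Section FuzzySigma.
Variables (R : realFieldType) (V : finType) (mu : V -> V -> R).

Lemma fsigma_ge0 : 0 <= fsigma mu.
Proof. by apply: divr_ge0 => //; apply: sumr_ge0 => v _; exact: sqr_ge0. Qed.

Lemma sqr_fdeg_subr_le_fsigma (a b : V) :
  (fdeg mu a - fdeg mu b) ^+ 2 <= 2 * #|V|%:R * fsigma mu.
Proof.
have n_gt0 : (0 < #|V|)%N by apply/card_gt0P; exists a.
rewrite /fsigma -mulrA [_ * (_ / _)]mulrC divfK ?pnatr_eq0 -?lt0n //.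
exact: sqr_subr_le_sum_sqr_dev.
Qed.

End FuzzySigma.

Theorem proposition2p10 (R : realFieldType) (V : finType) (v0 : V)
  (nu : V -> R) (mu : V -> V -> R) :
  is_fuzzy_graph nu mu ->
  ~ fuzzy_regular mu ->
  fsigma mu >= (fDelta v0 mu - fdelta v0 mu) ^+ 2 / (#|V|%:R ^+ 2).
Proof.
move=> _ _; rewrite /fDelta /fdelta.
have [a ->] := bigmax_attained v0 (fdeg mu).
have [b ->] := bigmin_attained v0 (fdeg mu).
have [<-|neq_ab] := eqVneq a b.
  by rewrite subrr expr0n mul0r fsigma_ge0.
have n_ge2 : 2 <= #|V|%:R :> R.
  by rewrite (ler_nat R 2); apply/card_gt1P; exists a, b.
rewrite ler_pdivrMr ?exprn_gt0 ?(lt_le_trans _ n_ge2) //.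
apply: le_trans (sqr_fdeg_subr_le_fsigma mu a b) _.
by rewrite mulrC expr2 ler_wpM2l ?fsigma_ge0 // ler_wpM2r.
Qed.
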